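(* The rolling sieve is $O(\log n/\log\log n)$-incremental.
   Context: Model of computation: a RAM where, for input $n$, arithmetic operations on integers of $O(\log n)$ bits and other basic operations have unit cost. A sieve (an algorithm listing primes in increasing order) is $t(n)$-incremental if, in the worst case, after having found all primes up to $n$, it requires $(p-n)\cdot t(n)+O(1)$ operations to find $p$, the smallest prime exceeding $n$. The rolling sieve is the following algorithm. Its data structure is a circular array $T[0..\Delta-1]$ of stacks (linked lists). Initialization with a starting value $\mathrm{start}$: set $r=\lfloor\sqrt{\mathrm{start}}\rfloor+1$, $s=r^2$, $\Delta=r+2$, all stacks empty; for each prime $p\le r-1$ push $p$ onto stack $T[(p-(\mathrm{start}\bmod p))\bmod p]$; set $\mathrm{pos}=0$, $m=\mathrm{start}$. The procedure next() does: set isPrime = true; while $T[\mathrm{pos}]$ is nonempty, pop $p$ from it, push $p$ onto $T[(\mathrm{pos}+p)\bmod\Delta]$, and set isPrime = false; then if $m=s$: if isPrime is true, push $r$ onto $T[(\mathrm{pos}+r)\bmod\Delta]$ and set isPrime = false; in any case set $r=r+1$, $s=r^2$; then set $m=m+1$, $\mathrm{pos}=(\mathrm{pos}+1)\bmod\Delta$, and if $\mathrm{pos}=0$ increase $\Delta$ by $2$ (appending two new empty stacks); return isPrime (which reports whether the old value of $m$ is prime). The next prime after the current position is found by calling next() repeatedly until it returns true. The sieve is initialized with $\mathrm{start}=100$, the primes up to $100$ being output directly. *)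

From mathcomp Require Import all_boot.
From Stdlib Require Import Reals.

Set Implicit Arguments.
Unset Strict Implicit.
Unset Printing Implicit Defensive.

(* State of the rolling sieve.  The circular array of stacks T[0..delta-1]
   is modelled as a function nat -> seq nat (head of the list = top). *)
Record rs_state := RS {
  rs_T : nat -> seq nat;
  rs_delta : nat;
  rs_pos : nat;
  rs_m : nat;
  rs_r : nat;
  rs_s : nat }.

Definition isqrt (n : nat) : nat := find (fun i => n < i.+1 * i.+1) (iota 0 n.+1).

Definition push (p k : nat) (T : nat -> seq nat) : nat -> seq nat :=
  fun j => if j == k then p :: T j else T j.

Definition clear (k : nat) (T : nat -> seq nat) : nat -> seq nat :=
  fun j => if j == k then [::] else T j.

Definition rs_init (start : nat) : rs_state :=
  let r := (isqrt start).+1 in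
  let T := foldl (fun T p => push p ((p - start %% p) %% p) T)
                 (fun _ => [::]) [seq p <- iota 0 r | prime p] in
  RS T (r + 2) 0 start r (r * r).

(* One call of next(): returns the new state, the boolean isPrime
   (whether the old m is prime) and the number of unit operations used,
   counted as (number of pops) + 1: each pop/push iteration of the while
   loop costs O(1) and the rest of the procedure costs O(1). *)
Definition rs_next (st : rs_state) : rs_state * bool * nat :=
  let: RS T delta pos m r s := st in
  let l := T pos in
  let T1 := foldl (fun T p => push p ((pos + p) %% delta) T) (clear pos T) l in
  let isP := nilp l in
  let: (T2, isP2, r2, s2) :=
     if m == s then
       let T2 := if isP then push r ((pos + r) %% delta) T1 else T1 in
       (T2, false, r.+1, r.+1 * r.+1)
     else (T1, isP, r, s) in
  let m3 := m.+1 in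
  let pos3 := pos.+1 %% delta in
  let: (T3, delta3) :=
     if pos3 == 0 then (clear delta.+1 (clear delta T2), delta + 2)
     else (T2, delta) in
  (RS T3 delta3 pos3 m3 r2 s2, isP2, size l + 1).

Definition rs_iter (k : nat) (st : rs_state) : rs_state :=
  iter k (fun st => (rs_next st).1.1) st.

Definition rs_result (st : rs_state) (i : nat) : bool :=
  (rs_next (rs_iter i st)).1.2.

Definition rs_cost (st : rs_state) (k : nat) : nat :=
  \sum_(i < k) (rs_next (rs_iter i st)).2.

(* The sieve initialized with start = 100, after having processed
   (i.e. found all primes among) all integers up to n, n >= 99:
   exactly n + 1 - 100 calls of next() have been made, so m = n + 1. *)
Definition rs_after (n : nat) : rs_state := rs_iter (n.+1 - 100) (rs_init 100).

(* Every sieving prime q < r, where (r - 1)^2 <= m <= r^2, waits on the stack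
   of the slot holding its next multiple >= m.  A call of next() at m therefore
   pops exactly the prime divisors of m below r: it decides the primality of m
   correctly and costs at most omega(m) + 1 operations.  Comparing 2^k with the
   prime factorization of C(2k, k) for k = n^2 yields a prime in (n, 2n^2], so
   every m examined before the next prime is at most n^3; since u^u <= m for
   u = omega(m)/2, this gives omega(m) = O(log n / log log n). *)

From mathcomp Require Import all_boot zify.
From Stdlib Require Import Reals Lra.
(* [Reals] rebinds [^] on [nat] to [Nat.pow]; restore ssrnat's notations. *)
Import ssrnat.

Set Implicit Arguments.
Unset Strict Implicit.
Unset Printing Implicit Defensive.

(** * The invariant of the rolling sieve *)

(* Distance from [m] up to the next multiple of [q]; the initialization puts
   the prime [p] into slot [mgap p start]. *)
Definition mgap (q m : nat) := (q - m %% q) %% q.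

Section NextMultiple.
Variable q : nat.
Hypothesis q_gt0 : 0 < q.

Lemma mgap_lt m : mgap q m < q.
Proof. by rewrite ltn_mod. Qed.

Lemma dvdn_add_mgap m : q %| m + mgap q m.
Proof.
rewrite /dvdn modnDmr {1}(divn_eq m q) -addnA subnKC; last exact/ltnW/ltn_pmod.
by rewrite modnMDl modnn.
Qed.

Lemma mgap_eq m d : d < q -> q %| m + d -> mgap q m = d.
Proof.
move=> lt_dq; rewrite /dvdn => /eqP dvd_d.
move: (dvdn_add_mgap m); rewrite /dvdn -dvd_d.
by rewrite -/(_ == _ %[mod q]) eqn_modDl !modn_small ?mgap_lt // => /eqP.
Qed.

Lemma mgap_eq0 m : (mgap q m == 0) = (q %| m).
Proof.
apply/eqP/idP => [gap0|dvd_m]; first by have := dvdn_add_mgap m; rewrite gap0 addn0.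
by apply: mgap_eq; rewrite ?addn0.
Qed.

Lemma mgapS m : mgap q m.+1 = if q %| m then q.-1 else (mgap q m).-1.
Proof.
have lt_gap := mgap_lt m; case: ifP => [dvd_m | ndvd_m]; apply: mgap_eq.
- by rewrite prednK.
- by rewrite addSnnS prednK // dvdn_addr ?dvdnn.
- exact: leq_ltn_trans (leq_pred _) lt_gap.
- rewrite addSnnS prednK ?dvdn_add_mgap // lt0n mgap_eq0; exact: negbT.
Qed.

End NextMultiple.

Lemma foldl_push (f : nat -> nat) (s : seq nat) T j :
  foldl (fun T p => push p (f p) T) T s j = rev [seq p <- s | j == f p] ++ T j.
Proof.
elim: s T => [|p s IHs] T //=.
by rewrite IHs /push; case: (j == f p); rewrite // rev_cons cat_rcons.
Qed.

Lemma eq_modn_addr D pos d : pos < D -> d < D -> (pos == (pos + d) %% D) = (d == 0).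
Proof.
move=> lt_pos lt_d; case: (ltnP (pos + d) D) => [lt_sum | le_sum].
  by rewrite modn_small //; apply/eqP/eqP; lia.
by rewrite -(subnK le_sum) modnDr modn_small; apply/eqP/eqP; lia.
Qed.

(* Slot [(pos + d) mod D] stands for the integer [m + d]. *)
Definition stacks_ok (T : nat -> seq nat) D pos m r :=
  forall j, j < D -> uniq (T j) /\
    forall q, (q \in T j) = [&& prime q, q < r & j == (pos + mgap q m) %% D].

Definition pop_stack (T : nat -> seq nat) D pos :=
  foldl (fun T' p => push p ((pos + p) %% D) T') (clear pos T) (T pos).

Section Stacks.
Variables (T : nat -> seq nat) (D pos m r : nat).
Hypotheses (pos_lt : pos < D) (r_le : r <= D).

Lemma mgap_ltD q : prime q -> q < r -> mgap q m < D.
Proof. by move=> /prime_gt0 q_gt0 lt_qr; have := mgap_lt q_gt0 m; lia. Qed.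

Hypothesis ok : stacks_ok T D pos m r.

Lemma mem_stack_pos q : (q \in T pos) = [&& prime q, q < r & q %| m].
Proof.
rewrite (proj2 (ok pos_lt)); case pq: (prime q) => //; case: ltnP => //= lt_qr.
by rewrite eq_modn_addr ?mgap_eq0 ?prime_gt0 ?mgap_ltD.
Qed.

Lemma stack_ndvd j q : j < D -> j != pos -> q \in T j -> ~~ (q %| m).
Proof.
move=> lt_j j_pos; rewrite (proj2 (ok lt_j)) => /and3P [pq _ /eqP j_eq].
rewrite -mgap_eq0 ?prime_gt0 //; apply: contra j_pos => /eqP gap0.
by rewrite j_eq gap0 addn0 modn_small.
Qed.

Lemma pop_stack_ok : stacks_ok (pop_stack T D pos) D pos.+1 m.+1 r.
Proof.
move=> j lt_j; have [uniq_j mem_j] := ok lt_j.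
rewrite /pop_stack foldl_push /clear; split.
  rewrite cat_uniq rev_uniq filter_uniq ?(proj1 (ok pos_lt)) //=.
  case: eqP => //= /eqP j_pos; rewrite uniq_j andbT; apply/hasPn => q in_j.
  by rewrite mem_rev mem_filter mem_stack_pos (negbTE (stack_ndvd lt_j j_pos in_j)) !andbF.
move=> q; rewrite mem_cat mem_rev mem_filter mem_stack_pos.
rewrite (fun_if (fun s : seq nat => q \in s)) in_nil mem_j.
case pq: (prime q) => /=; last by rewrite !andbF; case: ifP.
case: ltnP => lt_qr /=; last by rewrite !andbF; case: ifP.
have q_gt0 := prime_gt0 pq; have lt_gap := mgap_ltD pq lt_qr.
rewrite mgapS // addSnnS; have [dvd_m | ndvd_m] := boolP (q %| m).
  have /eqP gap0 : mgap q m == 0 by rewrite mgap_eq0.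
  by rewrite andbT prednK // gap0 addn0 (modn_small pos_lt); case: (j == pos); rewrite orbF.
have gap_ne0 : (mgap q m == 0) = false by rewrite mgap_eq0 //; exact: negbTE.
rewrite andbF prednK ?lt0n ?gap_ne0 //=.
by case: (boolP (j == pos)) => [/eqP -> | _]; rewrite ?eq_modn_addr ?gap_ne0.
Qed.

End Stacks.

Lemma push_stack_ok T D pos m r : prime r -> stacks_ok T D pos m r ->
  stacks_ok (push r ((pos + mgap r m) %% D) T) D pos m r.+1.
Proof.
move=> pr ok j lt_j; have [uniq_j mem_j] := ok j lt_j; rewrite /push.
split => [|q].
  by case: eqP => //= _; rewrite uniq_j mem_j ltnn andbF.
rewrite ltnS leq_eqVlt.
case: eqP => [j_eq | /eqP j_ne]; rewrite ?inE mem_j; case: (eqVneq q r) => [-> | _] //=.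
- by rewrite pr j_eq eqxx.
- by rewrite ltnn (negbTE j_ne) andbF.
Qed.

Lemma nonprime_stack_ok T D pos m r : ~~ prime r -> stacks_ok T D pos m r ->
  stacks_ok T D pos m r.+1.
Proof.
move=> npr ok j lt_j; have [uniq_j mem_j] := ok j lt_j; split => // q.
by rewrite ltnS leq_eqVlt mem_j; case: (eqVneq q r) => [-> | _]; rewrite ?(negbTE npr).
Qed.

Definition advance (T : nat -> seq nat) D pos m r s : rs_state :=
  let: (T', D') := if pos.+1 %% D == 0 then (clear D.+1 (clear D T), D + 2) else (T, D) in
  RS T' D' (pos.+1 %% D) m.+1 r s.

Lemma rs_nextE T D pos m r s :
  rs_next (RS T D pos m r s) =
  let T' := pop_stack T D pos in
  if m == s then
    (advance (if nilp (T pos) then push r ((pos + r) %% D) T' else T') D pos m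
       r.+1 (r.+1 * r.+1), false, size (T pos) + 1)
  else (advance T' D pos m r s, nilp (T pos), size (T pos) + 1).
Proof. by rewrite /rs_next /advance; case: (m == s); case: (pos.+1 %% D == 0). Qed.

Lemma rs_m_advance T D pos m r s : rs_m (advance T D pos m r s) = m.+1.
Proof. by rewrite /advance; case: ifP. Qed.

Lemma advance_stack_ok T D pos m r s : pos < D -> r <= D ->
  stacks_ok T D pos.+1 m.+1 r ->
  let st := advance T D pos m r s in stacks_ok (rs_T st) (rs_delta st) (rs_pos st) m.+1 r.
Proof.
move=> pos_lt r_le ok; rewrite /advance.
have [no_wrap | wrap] := ltnP pos.+1 D.
  by rewrite modn_small // (negbTE (lt0n_neq0 _)).
have pos_eq : pos.+1 = D by lia.
rewrite pos_eq modnn eqxx /= => j lt_j; rewrite /clear.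
have gap_small q : prime q -> q < r -> mgap q m.+1 < D.
  by move=> pq lt_qr; have := mgap_lt (prime_gt0 pq) m.+1; lia.
have [lt_jD | ge_jD] := ltnP j D.
  have [uniq_j mem_j] := ok j lt_jD.
  rewrite (ltn_eqF (leq_trans lt_jD (leqnSn D))) (ltn_eqF lt_jD); split => // q.
  rewrite mem_j pos_eq add0n; case pq: (prime q); case: ltnP => //= lt_qr.
  by have lt_gap := gap_small q pq lt_qr; rewrite modnDl !modn_small //; lia.
have -> : (if j == D.+1 then [::] else if j == D then [::] else T j) = [::].
  by case: eqP => // ?; case: eqP => // ?; lia.
split => // q; apply/esym/and3P => -[pq lt_qr /eqP j_eq].
by have lt_gap := gap_small q pq lt_qr; rewrite add0n modn_small in j_eq; lia.
Qed.

Definition no_pdiv_below r m := forall q, prime q -> q < r -> ~~ (q %| m).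

Lemma prime_no_pdiv_below r m : 2 < r -> (r - 1) * (r - 1) <= m < r * r ->
  prime m <-> no_pdiv_below r m.
Proof.
move=> r_gt2 /andP [lo hi]; split.
  move=> pm q pq lt_qr; apply/negP; rewrite dvdn_prime2 // => /eqP q_m; nia.
move=> no_pdiv; apply/negPn/negP => /primePns [|[p [pp p_sq dvd_p]]]; first by nia.
have lt_pr : p < r by rewrite expnS expn1 in p_sq; nia.
by have := no_pdiv p pp lt_pr; rewrite dvd_p.
Qed.

Lemma prime_no_pdiv_below_sqr r : 1 < r -> prime r <-> no_pdiv_below r (r * r).
Proof.
move=> r_gt1; split.
  move=> pr q pq lt_qr; rewrite Euclid_dvdM // orbb dvdn_prime2 //; apply/eqP; lia.
move=> no_pdiv; apply/negPn/negP => /primePns [|[p [pp p_sq dvd_p]]]; first by lia.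
have lt_pr : p < r by have := prime_gt1 pp; rewrite expnS expn1 in p_sq; nia.
by have := no_pdiv p pp lt_pr; rewrite dvdn_mulr.
Qed.

Lemma prime_sqrF r : 1 < r -> prime (r * r) = false.
Proof.
move=> r_gt1; apply/negP => /primeP [_ /(_ r (dvdn_mulr r (dvdnn r)))] /orP[]/eqP; nia.
Qed.

Lemma nilp_stack_pos T D pos m r : pos < D -> r <= D -> stacks_ok T D pos m r ->
  nilp (T pos) <-> no_pdiv_below r m.
Proof.
move=> pos_lt r_le ok; have mem_pos := mem_stack_pos pos_lt r_le ok.
split => [/nilP empty q pq lt_qr | no_pdiv].
  by apply/negP => dvd_q; have := mem_pos q; rewrite empty pq lt_qr dvd_q.
case stack: (T pos) => [// | q s]; have := mem_pos q.
rewrite stack mem_head => /esym /and3P [pq lt_qr dvd_q].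
by have := no_pdiv q pq lt_qr; rewrite dvd_q.
Qed.

(* [m - pos] is the value of [m] at the last wrap-around, where [D] grows by 2;
   starting from [m = 100], [D = 13] this keeps [D] near [2 sqrt m], so [r < D]. *)
Definition array_ok D pos m :=
  [/\ pos < D, 13 <= D, pos <= m & 4 * (m - pos) = (D - 1) * (D - 1) + 256].

Lemma array_ok_lt D pos m r : array_ok D pos m -> (r - 1) * (r - 1) <= m -> r < D.
Proof. by case=> *; nia. Qed.

Lemma array_ok_advance T D pos m r s : array_ok D pos m ->
  let st := advance T D pos m r s in array_ok (rs_delta st) (rs_pos st) m.+1.
Proof.
case=> pos_lt D_ge pos_le size_eq; rewrite /advance.
have [no_wrap | wrap] := ltnP pos.+1 D.
  by rewrite modn_small // (negbTE (lt0n_neq0 _)) //; split => /=; lia.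
have pos_eq : pos.+1 = D by lia.
by rewrite pos_eq modnn eqxx; split => /=; nia.
Qed.

Definition sieve_inv (st : rs_state) : Prop :=
  let: RS T D pos m r s := st in
  [/\ s = r * r, (r - 1) * (r - 1) <= m <= r * r, 2 < r, array_ok D pos m &
      stacks_ok T D pos m r].

Lemma sieve_inv_advance T D pos m r : 2 < r -> (r - 1) * (r - 1) <= m.+1 <= r * r ->
  array_ok D pos m -> r <= D -> stacks_ok T D pos.+1 m.+1 r ->
  sieve_inv (advance T D pos m r (r * r)).
Proof.
move=> r_gt2 r_bounds arr r_le ok.
have [pos_lt _ _ _] := arr.
have := advance_stack_ok (s := r * r) pos_lt r_le ok.
have := array_ok_advance T r (r * r) arr; have := rs_m_advance T D pos m r (r * r).
have : rs_r (advance T D pos m r (r * r)) = r /\ rs_s (advance T D pos m r (r * r)) = r * r.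
  by rewrite /advance; case: ifP.
by case: (advance T D pos m r (r * r)) => T' D' pos' m' r' s' /= [-> ->] ->.
Qed.

Lemma square_stack_ok T D pos r : pos < D -> r < D -> 1 < r -> stacks_ok T D pos (r * r) r ->
  let T' := pop_stack T D pos in
  stacks_ok (if nilp (T pos) then push r ((pos + r) %% D) T' else T') D pos.+1 (r * r).+1 r.+1.
Proof.
move=> pos_lt r_lt r_gt1 ok T'; have ok' := pop_stack_ok pos_lt (ltnW r_lt) ok.
have nilp_prime : nilp (T pos) = prime r.
  have nilp_iff := nilp_stack_pos pos_lt (ltnW r_lt) ok.
  have prime_iff := prime_no_pdiv_below_sqr r_gt1.
  by apply/idP/idP => [/nilp_iff/prime_iff | /prime_iff/nilp_iff].
rewrite nilp_prime; case: ifP => pr; last exact/nonprime_stack_ok/ok'/negbT.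
have -> : pos + r = pos.+1 + mgap r (r * r).+1.
  by rewrite (mgapS (ltnW r_gt1)) dvdn_mulr // addSnnS prednK //; lia.
exact: push_stack_ok.
Qed.

Lemma rs_m_next st : rs_m (rs_next st).1.1 = (rs_m st).+1.
Proof. by case: st => T D pos m r s; rewrite rs_nextE /=; case: ifP; rewrite rs_m_advance. Qed.

Lemma sieve_inv_next st : sieve_inv st -> sieve_inv (rs_next st).1.1.
Proof.
case: st => T D pos m r s [-> /andP [lo hi] r_gt2 arr ok].
have r_lt := array_ok_lt arr lo; have [pos_lt _ _ _] := arr.
rewrite rs_nextE /=; case: eqP => [m_sq | m_ne].
  subst m; apply: sieve_inv_advance => //; first by lia.
    by apply/andP; split; nia.
  exact: (square_stack_ok pos_lt r_lt (ltnW r_gt2) ok).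
apply: sieve_inv_advance => //=; first by apply/andP; split; lia.
  exact: ltnW.
exact: pop_stack_ok (ltnW r_lt) ok.
Qed.

Lemma rs_next_result st : sieve_inv st -> (rs_next st).1.2 = prime (rs_m st).
Proof.
case: st => T D pos m r s [-> /andP [lo hi] r_gt2 arr ok].
have r_le := ltnW (array_ok_lt arr lo); have [pos_lt _ _ _] := arr.
rewrite rs_nextE /=; case: eqP => [-> | /eqP m_ne]; first by rewrite prime_sqrF //; lia.
have m_bounds : (r - 1) * (r - 1) <= m < r * r by rewrite lo ltn_neqAle m_ne.
apply/idP/idP => [/(nilp_stack_pos pos_lt r_le ok) | ].
  by move/(prime_no_pdiv_below r_gt2 m_bounds).
by move/(prime_no_pdiv_below r_gt2 m_bounds)/(nilp_stack_pos pos_lt r_le ok).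
Qed.

Lemma rs_next_cost st : sieve_inv st -> (rs_next st).2 <= size (primes (rs_m st)) + 1.
Proof.
case: st => T D pos m r s [-> /andP [lo hi] r_gt2 arr ok].
have r_le := ltnW (array_ok_lt arr lo); have [pos_lt _ _ _] := arr.
have [uniq_pos _] := ok pos pos_lt.
rewrite rs_nextE /= (fun_if snd) /= if_same leq_add2r.
apply: uniq_leq_size => // q; rewrite (mem_stack_pos pos_lt r_le ok) mem_primes.
by case/and3P => -> _ ->; rewrite andbT; lia.
Qed.

Lemma sieve_inv_init : sieve_inv (rs_init 100).
Proof.
rewrite /rs_init (_ : isqrt 100 = 10) //.
split => // j lt_j; rewrite (foldl_push (mgap^~ 100)); split.
  by rewrite cats0 rev_uniq !filter_uniq ?iota_uniq.
move=> q; rewrite cats0 mem_rev !mem_filter mem_iota /= andbC.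
case pq: (prime q); case: ltnP => //= lt_q.
by rewrite add0n (@modn_small _ 13) //; have := mgap_lt (prime_gt0 pq) 100; lia.
Qed.

Lemma rs_m_iter k st : rs_m (rs_iter k st) = rs_m st + k.
Proof.
elim: k => [|k IHk]; first by rewrite addn0.
by rewrite /rs_iter iterS rs_m_next -/(rs_iter k st) IHk addnS.
Qed.

Lemma sieve_inv_iter k st : sieve_inv st -> sieve_inv (rs_iter k st).
Proof. by move=> inv_st; elim: k => // k IHk; rewrite /rs_iter iterS; apply: sieve_inv_next. Qed.

Lemma sieve_inv_after n i : 99 <= n ->
  sieve_inv (rs_iter i (rs_after n)) /\ rs_m (rs_iter i (rs_after n)) = n.+1 + i.
Proof.
move=> n_ge; rewrite /rs_after /rs_iter -iterD -/(rs_iter _ _).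
split; first exact/sieve_inv_iter/sieve_inv_init.
by rewrite rs_m_iter /=; lia.
Qed.

Lemma rs_result_after n i : 99 <= n -> rs_result (rs_after n) i = prime (n.+1 + i).
Proof.
move=> n_ge; have [inv m_eq] := sieve_inv_after i n_ge.
by rewrite /rs_result rs_next_result // m_eq.
Qed.

Lemma rs_step_cost_after n i : 99 <= n ->
  (rs_next (rs_iter i (rs_after n))).2 <= size (primes (n.+1 + i)) + 1.
Proof. by move=> n_ge; have [inv <-] := sieve_inv_after i n_ge; exact: rs_next_cost. Qed.

(** * Prime factors and a prime in (n, 2n^2] *)

Lemma prod_primes_le m : 0 < m -> \prod_(p <- primes m) p <= m.
Proof.
move=> m_gt0; rewrite {2}(prod_prime_decomp m_gt0) prime_decompE big_map /=.
rewrite big_seq [X in _ <= X]big_seq; apply: leq_prod => p.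
rewrite mem_primes => /and3P [pp _ dvd_p].
by rewrite -{1}(expn1 p) leq_exp2l ?prime_gt1 // logn_gt0 mem_primes pp m_gt0.
Qed.

Lemma prod_uniq_ge (s : seq nat) u : 0 < u -> uniq s -> 0 \notin s ->
  u ^ (size s - u) <= \prod_(p <- s) p.
Proof.
move=> u_gt0 uniq_s s_pos; rewrite (bigID (fun p => p < u)) /=.
have small : count (fun p => p < u) s <= u.
  rewrite -size_filter -[u in _ <= u](size_iota 0 u).
  by apply: uniq_leq_size => [|x]; rewrite ?filter_uniq // mem_filter mem_iota => /andP [].
have large : size s - u <= count (predC (fun p => p < u)) s.
  by have := count_predC (fun p => p < u) s; lia.
apply: leq_trans (leq_pexp2l u_gt0 large) _.
rewrite -[X in X <= _]mul1n -iter_muln_1 -big_const_seq; apply: leq_mul.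
  rewrite big_seq_cond prodn_cond_gt0 // => p /andP [in_s _].
  by rewrite lt0n; apply: contraNneq s_pos => <-.
rewrite big_seq_cond [X in _ <= X]big_seq_cond.
by apply: leq_prod => p /andP [_ /=]; rewrite -leqNgt.
Qed.

Lemma omega_pow_le m : 0 < m -> (size (primes m))./2 ^ (size (primes m))./2 <= m.
Proof.
move=> m_gt0; set u := _./2; have [-> | u_gt0] := posnP u; first by rewrite expn0.
apply: leq_trans (prod_primes_le m_gt0).
apply: leq_trans (prod_uniq_ge u_gt0 (primes_uniq m) _).
  by rewrite leq_pexp2l // /u; have := odd_double_half (size (primes m)); lia.
by apply/negP; rewrite mem_primes.
Qed.

Lemma bin_mid_ge k : 2 ^ k <= 'C(k.*2, k).
Proof.
elim: k => // k IHk; rewrite doubleS binS binS expnS.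
have := leq_bin2l k (leqnSn k.*2); lia.
Qed.

Lemma sum_leq_indicator N e : \sum_(1 <= j < N.+1) (j <= e) = minn N e.
Proof.
elim: N => [|N IHN]; first by rewrite big_geq ?min0n.
by rewrite big_nat_recr //= IHN; case: (ltnP N e) => /=; lia.
Qed.

Lemma divn_double_le k d : 0 < d -> k.*2 %/ d <= (k %/ d).*2.+1.
Proof.
move=> d_gt0; rewrite -ltnS ltn_divLR // {1}(divn_eq k d).
have := ltn_pmod k d_gt0; nia.
Qed.

Lemma logn_fact_ext p n N : prime p -> n <= N ->
  logn p n`! = \sum_(1 <= j < N.+1) n %/ p ^ j.
Proof.
move=> pp le_nN; rewrite logn_fact // [RHS](@big_cat_nat _ _ _ n.+1) //=.
rewrite [X in _ + X]big1_seq ?addn0 // => j /andP [_]; rewrite mem_index_iota => /andP [lt_nj _].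
by rewrite divn_small // (leq_trans lt_nj) // ltnW // ltn_expl // prime_gt1.
Qed.

Lemma logn_bin_mid_le p k : prime p -> logn p 'C(k.*2, k) <= trunc_log p k.*2.
Proof.
move=> pp; have p_gt1 := prime_gt1 pp; set e := trunc_log p k.*2.
have k_le : k <= k.*2 by rewrite -addnn leq_addr.
have fact_eq : logn p k.*2`! = logn p 'C(k.*2, k) + (logn p k`!).*2.
  have k2_k : k.*2 - k = k by rewrite -addnn addnK.
  by rewrite -{1}(bin_fact k_le) k2_k !lognM ?muln_gt0 ?fact_gt0 ?bin_gt0 // addnn.
have term j : k.*2 %/ p ^ j <= 2 * (k %/ p ^ j) + (j <= e).
  case: (leqP j e) => [_ | lt_ej] /=.
    by rewrite addn1 mul2n divn_double_le ?expn_gt0 ?prime_gt0.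
  rewrite divn_small // (leq_trans (trunc_log_ltn _ p_gt1)) // leq_exp2l //.
have fact_le : logn p k.*2`! <= (logn p k`!).*2 + e.
  rewrite !(@logn_fact_ext p _ k.*2) //.
  apply: leq_trans (leq_sum _ (fun j _ => term j)) _.
  rewrite big_split /= sum_leq_indicator -big_distrr /=.
  by rewrite -[X in _ <= X + _]mul2n leq_add2l geq_minr.
by move: fact_le; rewrite fact_eq addnC leq_add2l.
Qed.

Lemma pow_logn_bin_mid_le p k : prime p -> 0 < k -> p ^ logn p 'C(k.*2, k) <= k.*2.
Proof.
move=> pp k_gt0; apply: leq_trans (trunc_logP (prime_gt1 pp) _); last by rewrite double_gt0.
by rewrite leq_exp2l ?prime_gt1 ?logn_bin_mid_le.
Qed.

Lemma pdiv_bin_mid_le p k : prime p -> 0 < k -> p %| 'C(k.*2, k) -> p <= k.*2.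
Proof.
move=> pp k_gt0 dvd_p; apply: leq_trans (pow_logn_bin_mid_le pp k_gt0).
rewrite -{1}(expn1 p) leq_exp2l ?prime_gt1 //.
by rewrite logn_gt0 mem_primes pp dvd_p bin_gt0 -addnn leq_addr.
Qed.

Lemma bin_mid_le_pow k n : 0 < k -> (forall p, prime p -> p %| 'C(k.*2, k) -> p <= n) ->
  'C(k.*2, k) <= k.*2 ^ n.
Proof.
move=> k_gt0 small; have C_gt0 : 0 < 'C(k.*2, k) by rewrite bin_gt0 -addnn leq_addr.
have size_le : size (primes 'C(k.*2, k)) <= n.
  rewrite -[n in _ <= n](size_iota 1); apply: uniq_leq_size (primes_uniq _) _ => p.
  rewrite mem_primes mem_iota => /and3P [pp _ dvd_p]; rewrite prime_gt0 //=.
  by rewrite add1n ltnS small.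
rewrite {1}(prod_prime_decomp C_gt0) prime_decompE big_map /=.
apply: (@leq_trans (k.*2 ^ size (primes 'C(k.*2, k)))); last by rewrite leq_pexp2l ?double_gt0.
rewrite -iter_muln_1 -(count_predT (primes _)) -big_const_seq big_seq [X in _ <= X]big_seq.
by apply: leq_prod => p; rewrite mem_primes => /and3P [pp _ _]; apply: pow_logn_bin_mid_le.
Qed.

Lemma exp2_gt_double_sqr n : 9 < n -> 2 * (n * n) < 2 ^ n.
Proof.
elim: n => // n IHn n_gt9; have [-> // | n_ne9] := eqVneq n 9.
by have := IHn (ltac:(lia)); rewrite expnS; nia.
Qed.

(* Otherwise all prime factors of C(2k, k), k = n^2, are at most n, whence
   2^k <= C(2k, k) <= (2k)^n. *)
Lemma exists_prime_gap n : 9 < n -> exists2 q, prime q & n < q <= 2 * (n * n).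
Proof.
move=> n_gt9; set k := n * n; have k_gt0 : 0 < k by rewrite muln_gt0; lia.
case: (boolP (has (fun q => prime q && (n < q)) (iota 0 (2 * k).+1))).
  case/hasP => q; rewrite mem_iota add0n ltnS => /andP [_ q_le] /andP [pq lt_nq].
  by exists q; rewrite ?lt_nq.
move/hasPn => no_prime; exfalso.
have small p : prime p -> p %| 'C(k.*2, k) -> p <= n.
  move=> pp dvd_p; have le_p : p <= 2 * k by rewrite mul2n pdiv_bin_mid_le.
  by have := no_prime p; rewrite mem_iota add0n ltnS le_p pp /= -leqNgt; apply.
have := leq_trans (bin_mid_ge k) (bin_mid_le_pow k_gt0 small).
by rewrite expnM leqNgt ltn_exp2r -?mul2n ?exp2_gt_double_sqr //; lia.
Qed.

(** * Logarithmic estimates *)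

Section LnBounds.
Local Open Scope R_scope.

Lemma ln_le_pred w : 0 < w -> ln w <= w - 1.
Proof. by move=> w_gt0; have := exp_ineq1_le (ln w); rewrite exp_ln //; lra. Qed.

Lemma ln_lt_half z : 0 < z -> ln z < z / 2.
Proof.
move=> z_gt0; have ln2_lt1 : ln 2 < 1.
  by rewrite -[1]ln_exp; apply: ln_increasing; [lra | have := exp_ineq1 1; lra].
have -> : ln z = ln 2 + ln (z / 2) by rewrite -ln_mult; [congr ln; field | lra | lra].
by have := @ln_le_pred (z / 2) ltac:(lra); lra.
Qed.

Lemma ln_le_ln a b : 0 < a -> a <= b -> ln a <= ln b.
Proof. by move=> a_gt0 [lt_ab | <-]; [left; exact: ln_increasing | lra]. Qed.

Lemma ln_pos x : 1 < x -> 0 < ln x.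
Proof. by move=> x_gt1; rewrite -ln_1; apply: ln_increasing; lra. Qed.

Lemma ln_ln_bounds x : 3 < x -> 1 < ln x /\ 0 < ln (ln x) < ln x.
Proof.
move=> x_gt3; have ln_gt1 : 1 < ln x.
  by rewrite -[1]ln_exp; apply: ln_increasing; [apply: exp_pos | have := exp_le_3; lra].
have := ln_lt_half (ltac:(lra) : 0 < ln x); have := ln_pos ln_gt1; split; [lra | split; lra].
Qed.

Lemma le_of_mul_ln_le U L : 1 < L -> 0 < U -> U * ln U <= 3 * L -> U <= 6 * (L / ln L).
Proof.
move=> L_gt1 U_gt0 UlnU; have lnL_gt0 := ln_pos L_gt1.
set y := 6 * (L / ln L).
have y_gt0 : 0 < y by apply: Rmult_lt_0_compat; [lra | apply: Rdiv_lt_0_compat; lra].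
have y_lnL : y * ln L = 6 * L by rewrite /y; field; lra.
apply: Rnot_lt_le => lt_yU.
have ln_y : ln L / 2 < ln y.
  have -> : ln y = ln 6 + ln L - ln (ln L).
    have inv_pos := Rinv_0_lt_compat _ lnL_gt0.
    by rewrite /y /Rdiv !ln_mult ?ln_Rinv //; nra.
  by have := ln_lt_half lnL_gt0; have := ln_pos (ltac:(lra) : 1 < 6); lra.
have := ln_increasing _ _ y_gt0 lt_yU; nra.
Qed.

End LnBounds.

Lemma INR_expn a b : INR (a ^ b) = (INR a ^ b)%R.
Proof. by elim: b => // b IHb; rewrite expnS mult_INR IHb. Qed.

Lemma INR_gt3 n : 100 <= n -> (3 < INR n)%R.
Proof. by move=> n_ge; have := le_INR 100 n (elimT leP n_ge); rewrite /=; lra. Qed.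

Lemma ln_ratio_ge1 n : 100 <= n -> (1 <= ln (INR n) / ln (ln (INR n)))%R.
Proof.
move=> /INR_gt3/ln_ln_bounds [_ [lnln_gt0 lt_ln]].
by apply: (Rmult_le_reg_r _ _ _ lnln_gt0); rewrite /Rdiv Rmult_assoc Rinv_l; lra.
Qed.

Lemma self_pow_le_ln_ratio n u : 100 <= n -> u ^ u <= n ^ 3 ->
  (INR u <= 6 * (ln (INR n) / ln (ln (INR n))))%R.
Proof.
move=> n_ge uu_le; have [ln_gt1 _] := ln_ln_bounds (INR_gt3 n_ge).
have [-> | u_gt0] := posnP u; first by have := ln_ratio_ge1 n_ge; rewrite /=; lra.
have U_gt0 : (0 < INR u)%R by apply: lt_0_INR; apply/ltP.
have n_gt0 : (0 < INR n)%R by have := INR_gt3 n_ge; lra.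
have pow_le : (INR u ^ u <= INR n ^ 3)%R by rewrite -!INR_expn; apply/le_INR/leP.
apply: le_of_mul_ln_le => //; have := ln_le_ln (pow_lt _ u U_gt0) pow_le.
by rewrite !ln_pow //=; lra.
Qed.

Lemma sum_INR_le (f : nat -> nat) k B : (forall i, i < k -> (INR (f i) <= B)%R) ->
  (INR (\sum_(i < k) f i) <= INR k * B)%R.
Proof.
elim: k => [|k IHk] f_le; first by rewrite big_ord0 /=; lra.
rewrite big_ord_recr plus_INR S_INR Rmult_plus_distr_r Rmult_1_l /=.
by apply: Rplus_le_compat; [apply: IHk => i lt_ik; apply: f_le; exact: ltnW | exact: f_le].
Qed.

Lemma omega_succ_le n m : 100 <= n -> 0 < m <= n ^ 3 ->
  (INR (size (primes m) + 1) <= 14 * (ln (INR n) / ln (ln (INR n))))%R.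
Proof.
move=> n_ge /andP [m_gt0 m_le].
have u_le := self_pow_le_ln_ratio n_ge (leq_trans (omega_pow_le m_gt0) m_le).
set t := size (primes m) in u_le *.
have t_le : t + 1 <= t./2 + t./2 + 2 by have := odd_double_half t; case: (odd t) => /=; lia.
have := le_INR _ _ (elimT leP t_le); rewrite !plus_INR /=.
by have := ln_ratio_ge1 n_ge; lra.
Qed.

Theorem theorem3 :
  exists (C D : R) (N : nat), (100 <= N)%nat /\ forall n p : nat,
    (N <= n)%nat ->
    n < p -> prime p -> (forall q, n < q < p -> ~~ prime q) ->
    exists k : nat,
      [/\ (0 < k)%nat,
          rs_result (rs_after n) k.-1,
          (forall i, (i < k.-1)%nat -> ~~ rs_result (rs_after n) i) &
          (INR (rs_cost (rs_after n) k)
             <= INR (p - n) * C * (ln (INR n) / ln (ln (INR n))) + D)%R].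
Proof.
exists 14%R, 0%R, 100; split => // n p n_ge lt_np pp no_prime_between.
have n_ge99 : 99 <= n by lia.
have p_le : p <= 2 * (n * n).
  have [q pq /andP [lt_nq q_le]] := exists_prime_gap (ltac:(lia) : 9 < n).
  rewrite leqNgt; apply/negP => lt_qp.
  by have := no_prime_between q; rewrite lt_nq (leq_ltn_trans q_le lt_qp) pq => /(_ isT).
exists (p - n); split.
- by rewrite subn_gt0.
- by rewrite rs_result_after // (_ : n.+1 + (p - n).-1 = p) //; lia.
- by move=> i lt_i; rewrite rs_result_after //; apply: no_prime_between; lia.
rewrite Rplus_0_r Rmult_assoc /rs_cost.
apply: (@sum_INR_le (fun i => (rs_next (rs_iter i (rs_after n))).2)) => i lt_i.
apply: Rle_trans (le_INR _ _ (elimT leP (rs_step_cost_after i n_ge99))) _.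
by apply: omega_succ_le => //; apply/andP; split; nia.
Qed.
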